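(* Let $V$ be a finite nonempty set, $U,U'\subseteq V$ disjoint, $U''=V\setminus(U\cup U')$, $i\in U$, $j\in U'$, and $\hat x$ a maximally specific partial function on $P_V$. Let $P'_{01}=\{pq\in U\times U'\mid \hat x_{pi}\neq 0\neq \hat x_{jq}\}\setminus\hat x^{-1}(1)$ and $P'_{10}=\big((U''\times U)\cup(U'\times U)\cup(U'\times U'')\big)\setminus\hat x^{-1}(0)$. If $\hat x^{-1}(0)\cap P'_{01}=\emptyset$ and $\hat x^{-1}(1)\cap P'_{10}=\emptyset$, then $\gamma^{ij|1}(X_V[\hat x])\subseteq X_V[\hat x]$.
   Context: $P_V=\{pq\in V^2\mid p\neq q\}$; $X_V$ is the set of $x\in\{0,1\}^{P_V}$ with $x_{pq}+x_{qr}-x_{pr}\le 1$ for all pairwise distinct $p,q,r\in V$. A partial function $\tilde x$ is a map from $\operatorname{dom}(\tilde x)\subseteq P_V$ to $\{0,1\}$, $\tilde x^{-1}(b)$ the pairs mapped to $b$; convention $\tilde x_{aa}=1$ and $x_{aa}=1$ for all $a\in V$, $x\in X_V$. $X_V[\tilde x]=\{x\in X_V\mid x_{pq}=\tilde x_{pq}\ \forall pq\in\operatorname{dom}(\tilde x)\}$. A pair $pq$ is decided if $x_{pq}=x'_{pq}$ for all $x,x'\in X_V[\tilde x]$; $\tilde x$ is maximally specific if $X_V[\tilde x]\ne\emptyset$ and the decided pairs are exactly $\operatorname{dom}(\tilde x)$. For $A,B\subseteq V$ disjoint with $A\cup B=V$, $\sigma_{A\times B}\colon X_V\to X_V$ sets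 $\sigma_{A\times B}(x)_{pq}=0$ if $pq\in A\times B$ and $=x_{pq}$ otherwise. For $ij\in P_V$, $\sigma_{ij}\colon X_V\to X_V$ sets $\sigma_{ij}(x)_{pq}=1$ if $x_{pi}=x_{jq}=1$ and $=x_{pq}$ otherwise. Let $\gamma=\sigma_{ij}\circ\sigma_{(V\setminus U)\times U}\circ\sigma_{U'\times(V\setminus U')}$ and $\gamma^{ij|1}\colon X_V[\hat x]\to X_V$ with $\gamma^{ij|1}(x)=x$ if $x_{ij}=1$ and $\gamma^{ij|1}(x)=\gamma(x)$ if $x_{ij}=0$. *)

From mathcomp Require Import all_boot.
Set Implicit Arguments. Unset Strict Implicit. Unset Printing Implicit Defensive.

Section Defs.
Variable V : finType.

(* An element x of {0,1}^{P_V} is represented as a relation V -> V -> bool;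
   diagonal values are ignored (convention x_aa = 1 is applied via [ev]). *)
Definition ev (x : rel V) (p q : V) : bool := (p == q) || x p q.

Definition inX (x : rel V) : Prop :=
  forall p q r : V, p != q -> q != r -> p != r -> x p q -> x q r -> x p r.

(* Partial functions P_V -> {0,1}: None = undefined; diagonal values ignored. *)
Definition pfun := V -> V -> option bool.

Definition hval (xh : pfun) (p q : V) : option bool :=
  if p == q then Some true else xh p q.

Definition indom (xh : pfun) (p q : V) : Prop := p != q /\ xh p q <> None.

Definition hinv (xh : pfun) (b : bool) : {set V * V} :=
  [set pq | (pq.1 != pq.2) && (xh pq.1 pq.2 == Some b)].

Definition inXh (xh : pfun) (x : rel V) : Prop :=
  inX x /\ forall (p q : V) (b : bool), p != q -> xh p q = Some b -> x p q = b.

Definition decided (xh : pfun) (p q : V) : Prop :=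
  forall x x' : rel V, inXh xh x -> inXh xh x' -> x p q = x' p q.

Definition max_specific (xh : pfun) : Prop :=
  (exists x, inXh xh x) /\
  forall p q : V, p != q -> (decided xh p q <-> indom xh p q).

Definition sigmaAB (A B : {set V}) (x : rel V) : rel V :=
  fun p q => if (p \in A) && (q \in B) then false else x p q.

Definition sigmaij (i j : V) (x : rel V) : rel V :=
  fun p q => if ev x p i && ev x j q then true else x p q.

Definition gamma (U U' : {set V}) (i j : V) (x : rel V) : rel V :=
  sigmaij i j (sigmaAB (~: U) U (sigmaAB U' (~: U') x)).

Definition gamma1 (U U' : {set V}) (i j : V) (x : rel V) : rel V :=
  if x i j then x else gamma U U' i j x.

Definition P01' (xh : pfun) (U U' : {set V}) (i j : V) : {set V * V} :=
  [set pq in setX U U' | (hval xh pq.1 i != Some false)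
                          && (hval xh j pq.2 != Some false)] :\: hinv xh true.

Definition P10' (xh : pfun) (U U' : {set V}) : {set V * V} :=
  let U'' := ~: (U :|: U') in
  (setX U'' U :|: setX U' U :|: setX U' U'') :\: hinv xh false.

End Defs.

(* gamma preserves transitivity: sigma_{AxB} deletes the pairs from A to B, which breaks no chain when A and B
   cover V, and sigma_ij adds exactly the pairs pq with x_pi = x_jq = 1, which keeps transitivity.  The entries
   prescribed by x^ survive: gamma erases a 1 only on (V\U) x U and U' x (V\U'), where P'_10 forbids prescribed
   1s, and it creates a 1 at pq only for pq in U x U' with x_pi = x_jq = 1, so x^_pi and x^_jq are not 0 and a
   prescribed 0 at pq would lie in P'_01. *)
From mathcomp Require Import all_boot.

Set Implicit Arguments.
Unset Strict Implicit.
Unset Printing Implicit Defensive.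

Section Gamma.
Variable V : finType.
Implicit Types (x : rel V) (A B : {set V}) (i j p q : V).

Lemma inX_evP x : inX x <-> transitive (ev x).
Proof.
split=> [xX q p r | evT p q r npq nqr npr xpq xqr].
- rewrite /ev; case: (eqVneq p q) => [-> _ //|npq].
  case: (eqVneq q r) => [-> /= -> //|nqr]; first by rewrite orbT.
  by case: (eqVneq p r) => //= npr; apply: xX.
- by have := evT q p r; rewrite /ev (negbTE npq) (negbTE nqr) (negbTE npr); apply.
Qed.

Lemma sigmaAB_inX A B x :
  (forall v, (v \in A) || (v \in B)) -> inX x -> inX (sigmaAB A B x).
Proof.
move=> AB xX p q r npq nqr npr; rewrite /sigmaAB.
case: ifP => // pq; case: ifP => // qr; case: ifP => [/andP[pA rB]|_]; last exact: xX.
by case/orP: (AB q) => [qA|qB]; [move: qr; rewrite qA rB | move: pq; rewrite pA qB].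
Qed.

Lemma sigmaAB_sub A B x p q : sigmaAB A B x p q -> x p q.
Proof. by rewrite /sigmaAB; case: ifP. Qed.

Lemma ev_sigmaAB_sub A B x p q : ev (sigmaAB A B x) p q -> ev x p q.
Proof. by rewrite /ev => /orP[-> //|/sigmaAB_sub ->]; rewrite orbT. Qed.

Lemma ev_sigmaij i j x p q :
  ev (sigmaij i j x) p q = ev x p q || ev x p i && ev x j q.
Proof.
by rewrite /ev /sigmaij; case: (p == q) => //=; case: ifP; rewrite ?orbT ?orbF.
Qed.

Lemma sigmaij_inX i j x : inX x -> inX (sigmaij i j x).
Proof.
move/inX_evP=> evT; apply/inX_evP=> q p r; rewrite !ev_sigmaij.
case/orP=> [pq|/andP[pi jq]]; case/orP=> [qr|/andP[qi jr]].
- by rewrite (evT _ _ _ pq qr).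
- by rewrite (evT _ _ _ pq qi) jr orbT.
- by rewrite pi (evT _ _ _ jq qr) orbT.
- by rewrite pi jr orbT.
Qed.

Lemma gamma_inX (U U' : {set V}) i j x : inX x -> inX (gamma U U' i j x).
Proof.
move=> xX; apply/sigmaij_inX/sigmaAB_inX => [v|]; first by rewrite inE orNb.
by apply: sigmaAB_inX => // v; rewrite inE orbN.
Qed.

Lemma gamma_true (U U' : {set V}) i j x p q :
  x p q -> ~~ ((p \notin U) && (q \in U)) -> ~~ ((p \in U') && (q \notin U')) ->
  gamma U U' i j x p q.
Proof.
move=> xpq /negbTE pqU /negbTE pqU'.
by rewrite /gamma /sigmaij /sigmaAB inE pqU inE pqU' xpq if_same.
Qed.

Lemma gamma_false (U U' : {set V}) i j x p q :
  [disjoint U & U'] -> i \in U -> j \in U' ->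
  ~~ x p q -> gamma U U' i j x p q -> [/\ p \in U, q \in U', ev x p i & ev x j q].
Proof.
move=> dUU' iU jU' /negbTE nxpq; rewrite /gamma /sigmaij.
case: ifP => [/andP[ypi yjq] _|_ /sigmaAB_sub/sigmaAB_sub]; last by rewrite nxpq.
have jU : j \notin U by rewrite (disjointFl dUU' jU').
split; [| | exact: ev_sigmaAB_sub (ev_sigmaAB_sub ypi)
           | exact: ev_sigmaAB_sub (ev_sigmaAB_sub yjq)].
- have [-> //|npi] := eqVneq p i; move: ypi; rewrite /ev (negbTE npi) /=.
  by rewrite /sigmaAB inE iU andbT; case: (p \in U).
- have [<- //|njq] := eqVneq j q; move: yjq; rewrite /ev (negbTE njq) /=.
  by rewrite /sigmaAB !inE jU jU'; case: (q \in U'); case: (q \in U); rewrite ?andbF.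
Qed.

Lemma inXh_ev_hval (xh : pfun V) x p q :
  inXh xh x -> ev x p q -> hval xh p q != Some false.
Proof.
case=> _ xxh; rewrite /ev /hval; have [// |npq /= xpq] := eqVneq p q.
by apply/eqP=> /(xxh _ _ _ npq); rewrite xpq.
Qed.

End Gamma.

Theorem corollary6p5 (V : finType) (U U' : {set V}) (i j : V) (xh : pfun V) :
  0 < #|V| ->
  [disjoint U & U'] ->
  i \in U -> j \in U' ->
  max_specific xh ->
  hinv xh false :&: P01' xh U U' i j = set0 ->
  hinv xh true :&: P10' xh U U' = set0 ->
  forall x : rel V, inXh xh x -> inXh xh (gamma1 U U' i j x).
Proof.
move=> _ dUU' iU jU' _ h01 h10 x xxh; have [xX xagree] := xxh.
rewrite /gamma1; case: ifP => [_ //|_]; split; first exact: gamma_inX.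
move=> p q [] npq xhpq; have xpq := xagree p q _ npq xhpq.
- have : (p, q) \notin hinv xh true :&: P10' xh U U' by rewrite h10 inE.
  rewrite !inE /= npq xhpq /= => pqP10.
  apply: gamma_true => //; apply: contra pqP10.
  + by case/andP=> /negbTE pU qU; rewrite pU qU (disjointFr dUU' qU); case: (p \in U').
  + by case/andP=> -> /negbTE qU'; rewrite qU' !orbT /=; case: (q \in U).
- apply/negbTE/negP=> /(gamma_false dUU' iU jU' (negbT xpq)).
  case=> pU qU' /(inXh_ev_hval xxh) hpi /(inXh_ev_hval xxh) hjq.
  have : (p, q) \notin hinv xh false :&: P01' xh U U' i j by rewrite h01 inE.
  by rewrite !inE /= npq xhpq pU qU' hpi hjq.
Qed.
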